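(* Let $\sim$ denote either $\cong$ or $\simeq$, and let $A,B,C,D$ be type expressions. (1) $\bullet A\sim\bullet B$ if and only if $A\sim B$. (2) $A\to B\sim C\to D$ if and only if either (a) $A\sim C$ and $B\sim D$, or (b) $B\sim D\sim\top$.
   Context: Type expressions: fix a countably infinite set of type variables $X,Y,Z,\dots$. Pseudo type expressions are generated by $A::=X\mid A\to A\mid \bullet A\mid \mu X.A$ ($\mu$ binds $X$; $\alpha$-convertible expressions are identified; $\to$ associates to the right; $\bullet$ binds tighter than $\to$, which binds tighter than $\mu$). $A[B/X]$ denotes capture-avoiding substitution. $\top$ abbreviates $\mu X.\bullet X$, and $\bullet^n A$ denotes $A$ prefixed by $n$ copies of $\bullet$. The tail $t(A)$ is defined by $t(X)=X$, $t(A\to B)=t(B)$, $t(\bullet A)=\bullet t(A)$, $t(\mu X.A)=\mu X.t(A)$; it always has the form $\bullet^{m_0}\mu X_1.\bullet^{m_1}\mu X_2.\cdots\mu X_n.\bullet^{m_n}Y$. $A$ is a $\top$-variant iff $Y=X_i$ for some $1\le i\le n$ with $X_i\notin\{X_{i+1},\dots,X_n\}$ and $m_i+\dots+m_n\ge 1$. $A$ is proper in $X$ iff: a variable $Y$ is proper in $X$ iff $Y\neq X$; $\bullet A$ is always proper in $X$; $A\to B$ is proper in $X$ iff both $A,B$ are proper in $X$ or $B$ is a $\top$-variant; for $Y\ne X$, $\mu Y.A$ is proper in $X$ iff $A$ is proper in $X$ or $\mu Y.A$ is a $\top$-variant. Type expressions are the least set of pseudo type expressions containing all type variables, closed under $\to$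 and $\bullet$, and containing $\mu X.A$ whenever it contains $A$ and $A$ is proper in $X$. Equality: $\cong$ is the least relation on type expressions such that: $A\cong A$; $A\cong B$ implies $B\cong A$; $A\cong B$ and $B\cong C$ imply $A\cong C$; $A\cong B$ implies $\bullet A\cong\bullet B$; $A\cong C$ and $B\cong D$ imply $A\to B\cong C\to D$; $A\to\top\cong\top$; $\mu X.A\cong A[\mu X.A/X]$; and if $A\cong C[A/X]$ with $C$ proper in $X$, then $A\cong\mu X.C$. $\simeq$ is the least relation satisfying the same closure conditions and additionally $\bullet(A\to B)\simeq\bullet A\to\bullet B$. *)

(* Type expressions in pure de Bruijn representation:
   alpha-equivalent pseudo type expressions are identified automatically. *)
From Stdlib Require Import Arith.

Inductive ty : Type :=
| Var : nat -> ty
| Arr : ty -> ty -> ty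
| Later : ty -> ty
| Mu : ty -> ty.       (* Mu A : binds index 0 in A *)

Fixpoint lift (k : nat) (A : ty) : ty :=
  match A with
  | Var n => if n <? k then Var n else Var (S n)
  | Arr a b => Arr (lift k a) (lift k b)
  | Later a => Later (lift k a)
  | Mu a => Mu (lift (S k) a)
  end.

(* subst k B A : capture-avoiding substitution of B for index k in A
   (B given relative to the context at depth k); indices > k decrease. *)
Fixpoint subst (k : nat) (B : ty) (A : ty) : ty :=
  match A with
  | Var n => if n =? k then B else if n <? k then Var n else Var (pred n)
  | Arr a b => Arr (subst k B a) (subst k B b)
  | Later a => Later (subst k B a)
  | Mu a => Mu (subst (S k) (lift 0 B) a)
  end.

(* C[B/X] where C is the body of a binder for X (index 0). *)
Definition subst0 (C B : ty) : ty := subst 0 B C.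

Definition top : ty := Mu (Later (Var 0)).

(* Status of the tail variable, computed bottom-up along the tail
   t(A) (the tail ignores the left sides of arrows):
   - Free j g : tail variable is index j relative to the current position,
                g = a Later occurs between the current position and it;
   - Resolved g : the tail variable is bound by a Mu on the tail, and g
                  says whether a Later occurs between that (innermost
                  binding) Mu and the variable. *)
Inductive tstat := Free (j : nat) (g : bool) | Resolved (g : bool).

Fixpoint tail_status (A : ty) : tstat :=
  match A with
  | Var j => Free j false
  | Arr _ b => tail_status b
  | Later a => match tail_status a with
               | Free j _ => Free j true
               | r => r
               end
  | Mu a => match tail_status a with
            | Free 0 g => Resolved g
            | Free (S j) g => Free j g
            | r => r
            end
  end.

(* A is a top-variant: tail is  .^{m0} mu X1 ... mu Xn .^{mn} Y with
   Y = X_i the innermost binder of that name and m_i + ... + m_n >= 1. *)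
Definition top_variant (A : ty) : Prop := tail_status A = Resolved true.

Fixpoint proper (k : nat) (A : ty) : Prop :=
  match A with
  | Var j => j <> k
  | Later _ => True
  | Arr a b => (proper k a /\ proper k b) \/ top_variant b
  | Mu a => proper (S k) a \/ top_variant (Mu a)
  end.

Inductive wf : ty -> Prop :=
| wf_var n : wf (Var n)
| wf_arr a b : wf a -> wf b -> wf (Arr a b)
| wf_later a : wf a -> wf (Later a)
| wf_mu a : wf a -> proper 0 a -> wf (Mu a).

(* teq false = the relation \cong ; teq true = the relation \simeq
   (which additionally has  later(A -> B) ~ later A -> later B). *)
Inductive teq (dist : bool) : ty -> ty -> Prop :=
| teq_refl A : wf A -> teq dist A A
| teq_sym A B : teq dist A B -> teq dist B A
| teq_trans A B C : teq dist A B -> teq dist B C -> teq dist A C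
| teq_later A B : teq dist A B -> teq dist (Later A) (Later B)
| teq_arr A B C D : teq dist A C -> teq dist B D ->
    teq dist (Arr A B) (Arr C D)
| teq_arr_top A : wf A -> teq dist (Arr A top) top
| teq_unfold A : wf (Mu A) -> teq dist (Mu A) (subst0 A (Mu A))
| teq_fix A C : wf A -> wf C -> proper 0 C ->
    teq dist A (subst0 C A) -> teq dist A (Mu C)
| teq_dist A B : dist = true -> wf A -> wf B ->
    teq dist (Later (Arr A B)) (Arr (Later A) (Later B)).

From Stdlib Require Import Arith Lia.

(* The "if" directions are congruences, using [A -> top ~ top]. For the
   converses, a derivation of [X ~ Y] cannot be inverted directly because of
   transitivity and the fixed-point rule. Instead we collect the ways in which
   [X] can be seen as [Later v] (or as [Arr a b]) by unfolding Mus, distributing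
   Later over arrows when ~ is \simeq, or answering [top] (resp. [a -> top]) when
   [X] is a top-variant; by induction on derivations, equal types have pairwise
   equal views. In the fixed-point case [A ~ C[A/X]], properness keeps [X] from
   being the head of [C], so the views of [C[A/X]] and [C[Mu C/X]] correspond.
   Top-variants are detected by the tail, counted with its Laters, which is an
   invariant of ~. *)

(** * Substitution, properness and well-formedness *)

Ltac case_nat_tests :=
  repeat match goal with
  | |- context [?a =? ?b] => destruct (Nat.eqb_spec a b)
  | |- context [?a <? ?b] => destruct (Nat.ltb_spec a b)
  end.

Ltac solve_var_case :=
  cbn [lift subst]; case_nat_tests; cbn [lift subst]; case_nat_tests;
  try reflexivity; try lia; f_equal; lia.

Lemma lift_lift A j k : j <= k -> lift (S k) (lift j A) = lift j (lift k A).
Proof.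
  revert j k; induction A; intros j k Hjk; simpl.
  - solve_var_case.
  - rewrite IHA1, IHA2; auto.
  - rewrite IHA; auto.
  - rewrite IHA by lia; auto.
Qed.

Lemma subst_lift A k U : subst k U (lift k A) = A.
Proof.
  revert k U; induction A; intros k U; simpl.
  - solve_var_case.
  - rewrite IHA1, IHA2; auto.
  - rewrite IHA; auto.
  - rewrite IHA; auto.
Qed.

Lemma lift_subst_above A j k U : j <= k ->
  lift j (subst k U A) = subst (S k) (lift j U) (lift j A).
Proof.
  revert j k U; induction A; intros j k U Hjk; simpl.
  - solve_var_case.
  - rewrite IHA1, IHA2; auto.
  - rewrite IHA; auto.
  - rewrite IHA, (lift_lift U 0 j) by lia; auto.
Qed.

Lemma lift_subst_below A j k U : k <= j ->
  lift j (subst k U A) = subst k (lift j U) (lift (S j) A).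
Proof.
  revert j k U; induction A; intros j k U Hkj; simpl.
  - solve_var_case.
  - rewrite IHA1, IHA2; auto.
  - rewrite IHA; auto.
  - rewrite IHA, (lift_lift U 0 j) by lia; auto.
Qed.

Lemma subst_subst A i j U V : j <= i ->
  subst i U (subst j V A) = subst j (subst i U V) (subst (S i) (lift j U) A).
Proof.
  revert i j U V; induction A; intros i j U V Hji; simpl.
  - cbn [lift subst]; case_nat_tests; cbn [lift subst]; case_nat_tests;
      try reflexivity; try lia; try (rewrite subst_lift; reflexivity); f_equal; lia.
  - rewrite IHA1, IHA2; auto.
  - rewrite IHA; auto.
  - rewrite IHA, (lift_lift U 0 j), (lift_subst_above V 0 i) by lia; auto.
Qed.

Lemma lift_unfold A k :
  lift k (subst0 A (Mu A)) = subst0 (lift (S k) A) (Mu (lift (S k) A)).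
Proof. unfold subst0; rewrite lift_subst_below by lia; reflexivity. Qed.

Lemma subst_unfold A k U :
  subst k U (subst0 A (Mu A)) =
  subst0 (subst (S k) (lift 0 U) A) (Mu (subst (S k) (lift 0 U) A)).
Proof. unfold subst0; rewrite subst_subst by lia; reflexivity. Qed.

Lemma tail_status_lift A k :
  (forall g, tail_status A = Resolved g -> tail_status (lift k A) = Resolved g) /\
  (forall j g, tail_status A = Free j g -> j < k -> tail_status (lift k A) = Free j g).
Proof.
  revert k; induction A; intros k; simpl.
  - split; intros; [discriminate|]. injection H as <- <-.
    case_nat_tests; simpl; [reflexivity | lia].
  - apply IHA2.
  - destruct (IHA k) as [IHr IHf].
    destruct (tail_status A) as [j g|g]; split; intros; try discriminate.
    + injection H as <- <-. rewrite (IHf j g); auto.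
    + rewrite (IHr g); auto.
  - destruct (IHA (S k)) as [IHr IHf].
    destruct (tail_status A) as [[|j] g|g]; split; intros; try discriminate.
    + injection H as <-. rewrite (IHf 0 g); auto; lia.
    + injection H as <- <-. rewrite (IHf (S j) g); auto; lia.
    + rewrite (IHr g); auto.
Qed.

Lemma tail_status_subst A k U :
  (forall g, tail_status A = Resolved g -> tail_status (subst k U A) = Resolved g) /\
  (forall j g, tail_status A = Free j g -> j < k -> tail_status (subst k U A) = Free j g).
Proof.
  revert k U; induction A; intros k U; simpl.
  - split; intros; [discriminate|]. injection H as <- <-.
    case_nat_tests; simpl; [lia | reflexivity | lia].
  - apply IHA2.
  - destruct (IHA k U) as [IHr IHf].
    destruct (tail_status A) as [j g|g]; split; intros; try discriminate.
    + injection H as <- <-. rewrite (IHf j g); auto.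
    + rewrite (IHr g); auto.
  - destruct (IHA (S k) (lift 0 U)) as [IHr IHf].
    destruct (tail_status A) as [[|j] g|g]; split; intros; try discriminate.
    + injection H as <-. rewrite (IHf 0 g); auto; lia.
    + injection H as <- <-. rewrite (IHf (S j) g); auto; lia.
    + rewrite (IHr g); auto.
Qed.

Lemma top_variant_lift A k : top_variant A -> top_variant (lift k A).
Proof. apply (tail_status_lift A k). Qed.

Lemma top_variant_subst A k U : top_variant A -> top_variant (subst k U A).
Proof. apply (tail_status_subst A k U). Qed.

Definition lift_index k j := if j <? k then j else S j.
Definition subst_index k j := if j <? k then j else pred j.

Lemma proper_lift A j k : proper j A -> proper (lift_index k j) (lift k A).
Proof.
  unfold lift_index; revert j k; induction A; intros j k HA; simpl in *.
  - case_nat_tests; simpl; lia.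
  - destruct HA as [[H1 H2]|H]; [left; auto | right; apply top_variant_lift; auto].
  - trivial.
  - destruct HA as [H|H]; [left | right; apply (top_variant_lift (Mu A)); auto].
    replace (S (if j <? k then j else S j))
      with (if S j <? S k then S j else S (S j)) by (case_nat_tests; lia).
    auto.
Qed.

Lemma proper_lift_self A k : proper k (lift k A).
Proof.
  revert k; induction A; intros k; simpl.
  - case_nat_tests; simpl; lia.
  - left; auto.
  - trivial.
  - left; auto.
Qed.

Lemma proper_subst C i U j : proper j C -> j <> i ->
  proper (subst_index i j) U -> proper (subst_index i j) (subst i U C).
Proof.
  unfold subst_index; revert i U j; induction C; intros i U j HC Hji HU; simpl in *.
  - case_nat_tests; subst; simpl; auto; case_nat_tests; lia.
  - destruct HC as [[H1 H2]|H]; [left; auto | right; apply top_variant_subst; auto].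
  - trivial.
  - destruct HC as [H|H]; [left | right; apply (top_variant_subst (Mu C)); auto].
    replace (S (if j <? i then j else pred j))
      with (if S j <? S i then S j else pred (S j)) by (case_nat_tests; lia).
    apply IHC; auto.
    replace (if S j <? S i then S j else pred (S j))
      with (lift_index 0 (if j <? i then j else pred j))
      by (unfold lift_index; case_nat_tests; lia).
    apply proper_lift; auto.
Qed.

Lemma wf_top : wf top.
Proof. repeat constructor. Qed.

Lemma wf_lift A k : wf A -> wf (lift k A).
Proof.
  intros HA; revert k; induction HA; intros k; simpl.
  - destruct (n <? k); constructor.
  - constructor; auto.
  - constructor; auto.
  - constructor; auto. apply (proper_lift a 0 (S k)); auto.
Qed.

Lemma wf_subst C k U : wf C -> wf U -> wf (subst k U C).
Proof.
  intros HC; revert k U; induction HC; intros k U HU; simpl.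
  - case_nat_tests; auto; constructor.
  - constructor; auto.
  - constructor; auto.
  - constructor; [apply IHHC, wf_lift; auto |].
    apply (proper_subst a (S k) (lift 0 U) 0); auto.
    apply proper_lift_self.
Qed.

Lemma wf_unfold A : wf (Mu A) -> wf (subst0 A (Mu A)).
Proof. intros HA; inversion HA; apply wf_subst; auto. Qed.

Lemma subst_inv_later C k U a : C <> Var k -> subst k U C = Later a ->
  exists c, C = Later c /\ a = subst k U c.
Proof.
  destruct C; simpl; intros NV E; try discriminate.
  - revert E; case_nat_tests; congruence.
  - injection E as <-; eauto.
Qed.

Lemma subst_inv_arr C k U a b : C <> Var k -> subst k U C = Arr a b ->
  exists c d, C = Arr c d /\ a = subst k U c /\ b = subst k U d.
Proof.
  destruct C; simpl; intros NV E; try discriminate.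
  - revert E; case_nat_tests; congruence.
  - injection E as <- <-; eauto.
Qed.

Lemma subst_inv_mu C k U a : C <> Var k -> subst k U C = Mu a ->
  exists c, C = Mu c /\ a = subst (S k) (lift 0 U) c.
Proof.
  destruct C; simpl; intros NV E; try discriminate.
  - revert E; case_nat_tests; congruence.
  - injection E as <-; eauto.
Qed.

(** * Tails *)

(* Unlike [tail_status], the shape of the tail counts the Laters above a free
   tail variable; this count is what makes tails invariant under [teq_fix]. *)
Inductive tail_shape := TailVar (j d : nat) | TailBound.

Definition tail_later t :=
  match t with TailVar j d => TailVar j (S d) | TailBound => TailBound end.

Lemma tail_later_bound t : tail_later t = TailBound -> t = TailBound.
Proof. destruct t; simpl; congruence. Qed.

Definition tail_mu t :=
  match t with
  | TailVar 0 _ => TailBound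
  | TailVar (S j) d => TailVar j d
  | TailBound => TailBound
  end.

Fixpoint tail A :=
  match A with
  | Var j => TailVar j 0
  | Arr _ b => tail b
  | Later a => tail_later (tail a)
  | Mu a => tail_mu (tail a)
  end.

Definition tail_lift k t :=
  match t with TailVar j d => TailVar (lift_index k j) d | TailBound => TailBound end.

Definition tail_delay d t :=
  match t with TailVar j d' => TailVar j (d + d') | TailBound => TailBound end.

Definition tail_subst k s t :=
  match t with
  | TailVar j d => if j =? k then tail_delay d s else TailVar (subst_index k j) d
  | TailBound => TailBound
  end.

Lemma tail_lift_comm A k : tail (lift k A) = tail_lift k (tail A).
Proof.
  revert k; induction A; intros k; simpl; unfold lift_index.
  - case_nat_tests; reflexivity.
  - auto.
  - rewrite IHA; destruct (tail A); reflexivity.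
  - rewrite IHA; destruct (tail A) as [[|j] d|]; simpl; unfold lift_index;
      case_nat_tests; reflexivity || lia.
Qed.

Lemma tail_subst_comm C k U : tail (subst k U C) = tail_subst k (tail U) (tail C).
Proof.
  revert k U; induction C; intros k U; simpl.
  - unfold subst_index; case_nat_tests; simpl; case_nat_tests; try reflexivity; try lia.
    destruct (tail U); reflexivity.
  - auto.
  - rewrite IHC; destruct (tail C) as [j d|]; simpl; auto.
    case_nat_tests; simpl; auto. destruct (tail U); reflexivity.
  - rewrite IHC, tail_lift_comm.
    destruct (tail C) as [[|j] d|]; simpl; auto; unfold subst_index, lift_index;
      case_nat_tests; simpl; try lia; try reflexivity.
    + subst; destruct (tail U); reflexivity.
    + destruct j; [lia | reflexivity].
Qed.

Lemma tail_unfold A : tail (subst0 A (Mu A)) = tail (Mu A).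
Proof.
  unfold subst0; rewrite tail_subst_comm; simpl.
  destruct (tail A) as [[|j] d|]; reflexivity.
Qed.

Lemma tail_of_tail_status A :
  (forall g, tail_status A = Resolved g -> tail A = TailBound) /\
  (forall j g, tail_status A = Free j g -> exists d, tail A = TailVar j d).
Proof.
  induction A; simpl.
  - split; intros; [discriminate|]. injection H as <- <-; eauto.
  - auto.
  - destruct IHA as [IHr IHf].
    destruct (tail_status A) as [j g|g]; split; intros; try discriminate.
    + injection H as <- <-. destruct (IHf j g) as [d ->]; simpl; eauto.
    + rewrite (IHr g); auto.
  - destruct IHA as [IHr IHf].
    destruct (tail_status A) as [[|j] g|g]; split; intros; try discriminate.
    + destruct (IHf 0 g) as [d ->]; auto.
    + injection H as <- <-. destruct (IHf (S j) g) as [d ->]; simpl; eauto.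
    + rewrite (IHr g); auto.
Qed.

Lemma top_variant_tail A : top_variant A -> tail A = TailBound.
Proof. apply (tail_of_tail_status A). Qed.

Lemma proper_tail_guarded C k d : proper k C -> tail C = TailVar k d -> d <> 0.
Proof.
  revert k d; induction C; intros k d HC E; simpl in *.
  - injection E; lia.
  - destruct HC as [[_ H]|H]; eauto.
    rewrite (top_variant_tail _ H) in E; discriminate.
  - destruct (tail C); simpl in E; [injection E; lia | discriminate].
  - destruct HC as [H|H].
    + destruct (tail C) as [[|j] d'|] eqn:E'; simpl in E; try discriminate.
      injection E as <- <-; eauto.
    + pose proof (top_variant_tail _ H) as T; simpl in T; congruence.
Qed.

Fixpoint head_var A : option nat :=
  match A with
  | Var j => Some j
  | Arr _ _ => None
  | Later a => head_var a
  | Mu a => match head_var a with Some (S j) => Some j | _ => None end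
  end.

Lemma head_var_tail A j : head_var A = Some j -> exists d, tail A = TailVar j d.
Proof.
  revert j; induction A; intros j H; simpl in *; try discriminate.
  - injection H as <-; eauto.
  - destruct (IHA j H) as [d ->]; simpl; eauto.
  - destruct (head_var A) as [[|j']|]; try discriminate. injection H as ->.
    destruct (IHA (S j) eq_refl) as [d ->]; simpl; eauto.
Qed.

Lemma head_var_subst C k U : head_var C <> Some k ->
  head_var (subst k U C) = option_map (subst_index k) (head_var C).
Proof.
  unfold subst_index; revert k U; induction C; intros k U H; simpl in *.
  - case_nat_tests; simpl; congruence.
  - reflexivity.
  - auto.
  - destruct (head_var C) as [[|j]|]; rewrite IHC by congruence; simpl; auto.
    assert (j <> k) by congruence.
    case_nat_tests; try lia; auto.
    destruct j; [lia | reflexivity].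
Qed.

Lemma head_var_unfold A : head_var A <> Some 0 ->
  head_var (subst0 A (Mu A)) = head_var (Mu A).
Proof.
  intros H. unfold subst0; rewrite head_var_subst by auto; simpl.
  destruct (head_var A) as [[|j]|]; unfold subst_index; simpl; congruence.
Qed.

(** * Basic properties of equality *)

Section Equality.

Variable dist : bool.
Notation teq := (teq dist).

Lemma teq_wf A B : teq A B -> wf A /\ wf B.
Proof.
  induction 1; intuition auto using wf_top, wf_unfold; repeat constructor; auto.
Qed.

Lemma teq_lift A B k : teq A B -> teq (lift k A) (lift k B).
Proof.
  intros H; revert k; induction H; intros k; simpl.
  - apply teq_refl, wf_lift; auto.
  - apply teq_sym; auto.
  - eapply teq_trans; eauto.
  - apply teq_later; auto.
  - apply teq_arr; auto.
  - apply teq_arr_top, wf_lift; auto.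
  - rewrite lift_unfold. apply (teq_unfold _ (lift (S k) A)), (wf_lift _ k H).
  - apply teq_fix; try apply wf_lift; auto.
    + apply (proper_lift C 0 (S k)); auto.
    + specialize (IHteq k). unfold subst0 in *. rewrite lift_subst_below in IHteq by lia.
      exact IHteq.
  - apply teq_dist; try apply wf_lift; auto.
Qed.

Lemma teq_subst A B k U : teq A B -> wf U -> teq (subst k U A) (subst k U B).
Proof.
  intros H; revert k U; induction H; intros k U HU; simpl.
  - apply teq_refl, wf_subst; auto.
  - apply teq_sym; auto.
  - eapply teq_trans; eauto.
  - apply teq_later; auto.
  - apply teq_arr; auto.
  - apply teq_arr_top, wf_subst; auto.
  - rewrite subst_unfold. apply (teq_unfold _ (subst (S k) (lift 0 U) A)), (wf_subst (Mu A)); auto.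
  - apply teq_fix; try apply wf_subst; auto using wf_lift.
    + apply (proper_subst C (S k) (lift 0 U) 0); auto. apply proper_lift_self.
    + specialize (IHteq k U HU). unfold subst0 in *. rewrite subst_subst in IHteq by lia.
      exact IHteq.
  - apply teq_dist; try apply wf_subst; auto.
Qed.

Lemma teq_mu A B : teq A B -> wf (Mu A) -> wf (Mu B) -> teq (Mu A) (Mu B).
Proof.
  intros H WA WB. inversion WB; subst.
  apply teq_fix; auto.
  eapply teq_trans; [apply teq_unfold; auto | apply teq_subst; auto].
Qed.

Lemma teq_subst_cong C k U U' : wf C -> teq U U' -> teq (subst k U C) (subst k U' C).
Proof.
  intros HC; revert k U U'; induction HC; intros k U U' HU; simpl;
    destruct (teq_wf _ _ HU) as [WU WU'].
  - destruct (n =? k); auto. destruct (n <? k); repeat constructor.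
  - apply teq_arr; auto.
  - apply teq_later; auto.
  - apply teq_mu.
    + apply IHHC, teq_lift; auto.
    + apply (wf_subst (Mu a)); auto. constructor; auto.
    + apply (wf_subst (Mu a)); auto. constructor; auto.
Qed.

Lemma tail_teq A B : teq A B -> tail A = tail B.
Proof.
  induction 1; simpl; try congruence.
  - symmetry; apply tail_unfold.
  - unfold subst0 in IHteq; rewrite tail_subst_comm in IHteq; rewrite IHteq at 1.
    destruct (tail C) as [[|j] d|] eqn:E; simpl; auto.
    destruct (tail A) as [j' d'|]; simpl in IHteq; [|reflexivity].
    (* a free tail of A would occur guarded, hence with more Laters, in C[A/X] *)
    injection IHteq; intros. apply (proper_tail_guarded C 0 d) in E; auto. lia.
Qed.

Lemma teq_top_later : teq top (Later top).
Proof. apply (teq_unfold _ (Later (Var 0))), wf_top. Qed.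

Lemma teq_mu_top A : wf (Mu A) -> teq A top -> teq (Mu A) top.
Proof.
  intros W H. eapply teq_trans; [apply teq_unfold; auto|].
  change top with (subst 0 (Mu A) top). apply teq_subst; auto.
Qed.

Lemma teq_arr_top_r A B : wf A -> teq B top -> teq (Arr A B) top.
Proof.
  intros WA HB. eapply teq_trans; [apply teq_arr; [apply teq_refl; auto | eauto]|].
  apply teq_arr_top; auto.
Qed.

Lemma teq_subst_tail_var_top C k d U : wf C -> tail C = TailVar k d ->
  wf U -> teq U top -> teq (subst k U C) top.
Proof.
  intros HC; revert k d U; induction HC; intros k d U E WU HU; simpl in *.
  - injection E as -> _. rewrite Nat.eqb_refl; auto.
  - apply teq_arr_top_r; [apply wf_subst|]; eauto.
  - destruct (tail a) eqn:Ea; try discriminate. injection E as -> _.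
    eapply teq_trans; [apply teq_later; eauto | apply teq_sym, teq_top_later].
  - destruct (tail a) as [[|j] d'|] eqn:Ea; try discriminate. injection E as -> _.
    apply teq_mu_top.
    + apply (wf_subst (Mu a)); auto. constructor; auto.
    + apply (IHHC (S k) d'); auto using wf_lift.
      change top with (lift 0 top). apply teq_lift; auto.
Qed.

Lemma tail_bound_teq_top C : wf C -> tail C = TailBound -> teq C top.
Proof.
  induction 1; intros E; simpl in *.
  - discriminate.
  - apply teq_arr_top_r; auto.
  - destruct (tail a) eqn:Ea; try discriminate.
    eapply teq_trans; [apply teq_later; auto | apply teq_sym, teq_top_later].
  - destruct (tail a) as [[|j] d|] eqn:Ea; try discriminate.
    + (* top is the unique solution of X ~ a[X/X] *)
      apply teq_sym, teq_fix; auto using wf_top.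
      apply teq_sym, (teq_subst_tail_var_top a 0 d); auto using wf_top.
      apply teq_refl, wf_top.
    + apply teq_mu_top; [constructor|]; auto.
Qed.

End Equality.

(** * Views *)

Section Simulation.

Variables (V : Type) (view : ty -> V -> Prop) (related : V -> V -> Prop).
Hypothesis related_trans : forall u v w, related u v -> related v w -> related u w.

Definition simulates X Y := forall v, view X v -> exists w, view Y w /\ related v w.
Definition bisimilar X Y := simulates X Y /\ simulates Y X.

Lemma bisimilar_refl X : (forall v, view X v -> related v v) -> bisimilar X X.
Proof. intros H; split; intros v Hv; eauto. Qed.

Lemma bisimilar_sym X Y : bisimilar X Y -> bisimilar Y X.
Proof. intros [H1 H2]; split; auto. Qed.

Lemma simulates_trans X Y Z : simulates X Y -> simulates Y Z -> simulates X Z.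
Proof.
  intros HXY HYZ u Hu.
  destruct (HXY u Hu) as [v [Hv Huv]]. destruct (HYZ v Hv) as [w [Hw Hvw]]. eauto.
Qed.

Lemma bisimilar_trans X Y Z : bisimilar X Y -> bisimilar Y Z -> bisimilar X Z.
Proof. intros [] []; split; eapply simulates_trans; eauto. Qed.

End Simulation.

Arguments simulates {V}.
Arguments bisimilar {V}.

Section LaterViews.

Variable dist : bool.
Notation teq := (teq dist).

(* [later_view X v] exhibits [X] as [Later v] up to equality. *)
Inductive later_view : ty -> ty -> Prop :=
| lv_later a : later_view (Later a) a
| lv_mu a v : later_view (subst0 a (Mu a)) v -> later_view (Mu a) v
| lv_top X : tail X = TailBound -> later_view X top
| lv_arr a b a' b' : dist = true ->
    later_view a a' -> later_view b b' -> later_view (Arr a b) (Arr a' b').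

Notation later_bisimilar := (bisimilar later_view teq).

Lemma later_view_tail X v : later_view X v -> tail X = tail_later (tail v).
Proof.
  induction 1; simpl; auto.
  rewrite <- IHlater_view, tail_unfold; reflexivity.
Qed.

Lemma later_view_wf X v : later_view X v -> wf X -> wf v.
Proof.
  induction 1; intros W.
  - inversion W; auto.
  - apply IHlater_view, wf_unfold; auto.
  - apply wf_top.
  - inversion W; subst; constructor; auto.
Qed.

Lemma later_view_bound X v : later_view X v -> wf X -> tail X = TailBound -> teq v top.
Proof.
  intros H W T. apply tail_bound_teq_top; [eapply later_view_wf; eauto|].
  rewrite (later_view_tail _ _ H) in T. destruct (tail v); [discriminate | auto].
Qed.

Lemma later_view_Later_inv a v : later_view (Later a) v -> wf a -> teq v a.
Proof.
  intros H W. inversion H; subst.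
  - apply teq_refl; auto.
  - apply teq_sym, tail_bound_teq_top; auto.
    simpl in *. destruct (tail a); [discriminate | auto].
Qed.

Lemma later_simulates_bound X Y : wf X ->
  tail X = TailBound -> tail Y = TailBound -> simulates later_view teq X Y.
Proof.
  intros W TX TY v H. exists top. split; [apply lv_top; auto|].
  eapply later_view_bound; eauto.
Qed.

Lemma later_view_subst_bound U U' C k v : teq U U' -> wf C ->
  tail (subst k U C) = TailBound -> later_view (subst k U C) v ->
  exists v', later_view (subst k U' C) v' /\ teq v v'.
Proof.
  intros HU WC T H. destruct (teq_wf _ _ _ HU) as [WU WU'].
  exists top. split.
  - apply lv_top. rewrite tail_subst_comm, <- (tail_teq _ _ _ HU), <- tail_subst_comm; auto.
  - eapply later_view_bound; eauto using wf_subst.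
Qed.

(* Properness of [C] in [k] guarantees that a Later-view of [C[U/k]] comes
   from the structure of [C] itself, not from [U]. *)
Lemma later_view_subst U U' C k v : teq U U' -> wf C -> proper k C ->
  later_view (subst k U C) v -> exists v', later_view (subst k U' C) v' /\ teq v v'.
Proof.
  intros HU WC PC H.
  assert (NV : forall k C, proper k C -> C <> Var k) by (intros ? ? ? ->; simpl in *; auto).
  remember (subst k U C) as Z eqn:EZ. revert k C EZ WC PC.
  induction H; intros k C EZ WC PC;
    (destruct (tail (subst k U C)) eqn:T;
     [| eapply later_view_subst_bound; eauto; rewrite <- EZ; econstructor; eauto]).
  - destruct (subst_inv_later C k U a (NV _ _ PC) (eq_sym EZ)) as [c [-> ->]].
    inversion WC; subst. exists (subst k U' c). split; [constructor|].
    apply teq_subst_cong; auto.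
  - destruct (subst_inv_mu C k U a (NV _ _ PC) (eq_sym EZ)) as [c [-> ->]].
    inversion WC; subst. destruct PC as [PC|PC].
    + destruct (IHlater_view k (subst0 c (Mu c))) as [v' [Hv' Ev']].
      * symmetry; apply subst_unfold.
      * apply wf_unfold; auto.
      * apply (proper_subst c 0 (Mu c) (S k)); simpl; auto.
      * exists v'. split; auto. simpl. constructor. rewrite <- subst_unfold; auto.
    + pose proof (top_variant_tail _ (top_variant_subst _ k U PC)). congruence.
  - congruence.
  - destruct (subst_inv_arr C k U a b (NV _ _ PC) (eq_sym EZ)) as [ca [cb [-> [-> ->]]]].
    inversion WC; subst. destruct PC as [[Pa Pb]|PC].
    + destruct (IHlater_view1 k ca) as [a'' [Ha Ea]]; auto.
      destruct (IHlater_view2 k cb) as [b'' [Hb Eb]]; auto.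
      exists (Arr a'' b''). split; [constructor; auto | apply teq_arr; auto].
    + pose proof (top_variant_tail _ (top_variant_subst _ k U PC)). simpl in T. congruence.
Qed.

Lemma later_bisimilar_bound X Y : wf X -> wf Y ->
  tail X = TailBound -> tail Y = TailBound -> later_bisimilar X Y.
Proof. split; apply later_simulates_bound; auto. Qed.

Lemma later_bisimilar_refl X : wf X -> later_bisimilar X X.
Proof. intros W; apply bisimilar_refl; intros v Hv; apply teq_refl, (later_view_wf X); auto. Qed.

Lemma later_bisimilar_later A B : teq A B -> later_bisimilar (Later A) (Later B).
Proof.
  intros H. destruct (teq_wf _ _ _ H) as [WA WB]. pose proof (tail_teq _ _ _ H) as T.
  split; intros v Hv; inversion Hv; subst.
  - exists B; split; [constructor | auto].
  - exists top; split; [apply lv_top; simpl in *; congruence | apply teq_refl, wf_top].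
  - exists A; split; [constructor | apply teq_sym; auto].
  - exists top; split; [apply lv_top; simpl in *; congruence | apply teq_refl, wf_top].
Qed.

Lemma later_bisimilar_arr A B C D : teq B D ->
  later_bisimilar A C -> later_bisimilar B D -> later_bisimilar (Arr A B) (Arr C D).
Proof.
  intros H [IAC ICA] [IBD IDB]. pose proof (tail_teq _ _ _ H) as T.
  split; intros v Hv; inversion Hv; subst.
  - exists top; split; [apply lv_top; simpl in *; congruence | apply teq_refl, wf_top].
  - edestruct IAC as [x [Hc Ec]]; [eassumption|].
    edestruct IBD as [y [Hd Ed]]; [eassumption|].
    exists (Arr x y); split; [constructor | apply teq_arr]; auto.
  - exists top; split; [apply lv_top; simpl in *; congruence | apply teq_refl, wf_top].
  - edestruct ICA as [x [Ha Ea]]; [eassumption|].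
    edestruct IDB as [y [Hb Eb]]; [eassumption|].
    exists (Arr x y); split; [constructor | apply teq_arr]; auto.
Qed.

Lemma later_bisimilar_unfold A : wf (Mu A) -> later_bisimilar (Mu A) (subst0 A (Mu A)).
Proof.
  intros W. pose proof (wf_unfold A W) as W'. split; intros v Hv.
  - inversion Hv; subst.
    + exists v; split; auto. apply teq_refl, (later_view_wf (subst0 A (Mu A))); auto.
    + exists top; split; [apply lv_top; rewrite tail_unfold; auto | apply teq_refl, wf_top].
  - exists v; split; [constructor; auto|]. apply teq_refl, (later_view_wf (subst0 A (Mu A))); auto.
Qed.

Lemma later_bisimilar_fix A C : wf A -> wf C -> proper 0 C -> teq A (subst0 C A) ->
  later_bisimilar A (subst0 C A) -> later_bisimilar A (Mu C).
Proof.
  intros WA WC PC H [I1 I2].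
  assert (HF : teq A (Mu C)) by (apply teq_fix; auto).
  split; intros v Hv.
  - destruct (I1 _ Hv) as [w [Hw Ew]].
    destruct (later_view_subst A (Mu C) C 0 w HF WC PC Hw) as [w' [Hw' Ew']].
    exists w'; split; [constructor; auto | eapply teq_trans; eauto].
  - inversion Hv; subst.
    + edestruct (later_view_subst (Mu C) A C 0 v (teq_sym _ _ _ HF) WC PC) as [w [Hw Ew]];
        [eassumption|].
      destruct (I2 _ Hw) as [w' [Hw' Ew']].
      exists w'; split; [auto | eapply teq_trans; eauto].
    + exists top; split; [apply lv_top | apply teq_refl, wf_top].
      rewrite (tail_teq _ _ _ HF); auto.
Qed.

Lemma later_bisimilar_dist A B : dist = true -> wf A -> wf B ->
  later_bisimilar (Later (Arr A B)) (Arr (Later A) (Later B)).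
Proof.
  intros Hd WA WB. split; intros v Hv; inversion Hv; subst.
  - exists (Arr A B); split; [repeat constructor; auto | repeat constructor; auto].
  - exists top; split; [apply lv_top; simpl in *; auto | apply teq_refl, wf_top].
  - exists top; split; [apply lv_top; simpl in *; auto | apply teq_refl, wf_top].
  - exists (Arr A B); split; [constructor | apply teq_arr; apply later_view_Later_inv; auto].
Qed.

Lemma later_bisimilar_teq X Y : teq X Y -> later_bisimilar X Y.
Proof.
  induction 1.
  - apply later_bisimilar_refl; auto.
  - apply bisimilar_sym; auto.
  - eapply bisimilar_trans; eauto. apply teq_trans.
  - apply later_bisimilar_later; auto.
  - apply later_bisimilar_arr; auto.
  - apply later_bisimilar_bound; auto using wf_arr, wf_top.
  - apply later_bisimilar_unfold; auto.
  - apply later_bisimilar_fix; auto.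
  - apply later_bisimilar_dist; auto.
Qed.

Lemma teq_Later_inv A B : wf B -> teq (Later A) (Later B) -> teq A B.
Proof.
  intros WB H. destruct (proj1 (later_bisimilar_teq _ _ H) A (lv_later A)) as [v [Hv E]].
  eapply teq_trans; [exact E | apply later_view_Later_inv; auto].
Qed.

End LaterViews.

Section ArrowViews.

Variable dist : bool.
Notation teq := (teq dist).

(* [arrow_view X (a, b)] exhibits [X] as [Arr a b] up to equality. *)
Inductive arrow_view : ty -> ty * ty -> Prop :=
| av_arr a b : arrow_view (Arr a b) (a, b)
| av_mu a p : arrow_view (subst0 a (Mu a)) p -> arrow_view (Mu a) p
| av_top X a : tail X = TailBound -> wf a -> arrow_view X (a, top)
| av_later x a b : dist = true ->
    arrow_view x (a, b) -> arrow_view (Later x) (Later a, Later b).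

Definition teq_pair (p q : ty * ty) := teq (fst p) (fst q) /\ teq (snd p) (snd q).

Notation arrow_bisimilar := (bisimilar arrow_view teq_pair).

Lemma teq_pair_trans p q r : teq_pair p q -> teq_pair q r -> teq_pair p r.
Proof. intros [] []; split; eapply teq_trans; eauto. Qed.

Lemma arrow_view_tail X p : arrow_view X p -> tail X = tail (snd p).
Proof.
  induction 1; simpl in *; auto.
  - rewrite <- IHarrow_view, tail_unfold; reflexivity.
  - rewrite IHarrow_view; reflexivity.
Qed.

Lemma arrow_view_wf X p : arrow_view X p -> wf X -> wf (fst p) /\ wf (snd p).
Proof.
  induction 1; intros W; simpl in *.
  - inversion W; auto.
  - apply IHarrow_view, wf_unfold; auto.
  - auto using wf_top.
  - inversion W; subst. destruct IHarrow_view; auto. split; constructor; auto.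
Qed.

Lemma arrow_view_teq_pair_refl X p : arrow_view X p -> wf X -> teq_pair p p.
Proof. intros H W. destruct (arrow_view_wf X p H W); split; apply teq_refl; auto. Qed.

Lemma arrow_simulates_bound X Y : wf X ->
  tail X = TailBound -> tail Y = TailBound -> simulates arrow_view teq_pair X Y.
Proof.
  intros W TX TY [a b] H. destruct (arrow_view_wf _ _ H W) as [Wa Wb].
  exists (a, top). split; [apply av_top; auto|]. split; [apply teq_refl; auto|].
  apply tail_bound_teq_top; auto. rewrite <- (arrow_view_tail _ _ H); auto.
Qed.

Lemma arrow_bisimilar_split X Y : teq X Y ->
  (tail X <> TailBound -> arrow_bisimilar X Y) -> arrow_bisimilar X Y.
Proof.
  intros H K. destruct (teq_wf _ _ _ H) as [WX WY]. pose proof (tail_teq _ _ _ H) as T.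
  destruct (tail X) eqn:E.
  - apply K; discriminate.
  - split; apply arrow_simulates_bound; auto.
Qed.

(* Properness is not enough here: [Later U] inherits the arrow views of [U]
   by distribution, so [k] must not be the head variable of [C] even under
   Laters. *)
Lemma arrow_view_subst U U' C k p : teq U U' -> wf C -> head_var C <> Some k ->
  tail (subst k U C) <> TailBound -> arrow_view (subst k U C) p ->
  exists q, arrow_view (subst k U' C) q /\ teq_pair p q.
Proof.
  intros HU WC HC NT H.
  assert (NV : forall k C, head_var C <> Some k -> C <> Var k) by (intros ? ? ? ->; auto).
  remember (subst k U C) as Z eqn:EZ. revert k C EZ WC HC NT.
  induction H; intros k C EZ WC HC NT.
  - destruct (subst_inv_arr C k U a b (NV _ _ HC) (eq_sym EZ)) as [ca [cb [-> [-> ->]]]].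
    inversion WC; subst. exists (subst k U' ca, subst k U' cb). split; [constructor|].
    split; apply teq_subst_cong; auto.
  - destruct (subst_inv_mu C k U a (NV _ _ HC) (eq_sym EZ)) as [c [-> ->]].
    inversion WC; subst.
    assert (H0 : head_var c <> Some 0).
    { intros E. destruct (head_var_tail c 0 E) as [d Ed]. apply NT.
      rewrite EZ, tail_subst_comm; simpl; rewrite Ed; reflexivity. }
    destruct (IHarrow_view k (subst0 c (Mu c))) as [q [Hq Eq]].
    + symmetry; apply subst_unfold.
    + apply wf_unfold; auto.
    + rewrite head_var_unfold; auto.
    + rewrite tail_unfold; auto.
    + exists q. split; auto. simpl. constructor. rewrite <- subst_unfold; auto.
  - congruence.
  - destruct (subst_inv_later C k U x (NV _ _ HC) (eq_sym EZ)) as [c [-> ->]].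
    inversion WC; subst.
    destruct (IHarrow_view k c) as [[a' b'] [Hq [Ea Eb]]]; auto.
    + simpl in NT. intros T; apply NT; rewrite T; reflexivity.
    + exists (Later a', Later b'). split; [constructor; auto|].
      split; apply teq_later; auto.
Qed.

Lemma arrow_bisimilar_refl X : wf X -> arrow_bisimilar X X.
Proof. intros W; apply bisimilar_refl; intros p Hp; eapply arrow_view_teq_pair_refl; eauto. Qed.

Lemma arrow_bisimilar_later A B : teq A B -> tail (Later A) <> TailBound ->
  arrow_bisimilar A B -> arrow_bisimilar (Later A) (Later B).
Proof.
  intros H NT [IAB IBA]. pose proof (tail_teq _ _ _ H) as T.
  split; intros p Hp; inversion Hp; subst; try (simpl in *; congruence).
  - edestruct IAB as [[c d] [Hq [Ea Eb]]]; [eassumption|].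
    exists (Later c, Later d); split; [constructor | split; apply teq_later]; auto.
  - edestruct IBA as [[c d] [Hq [Ea Eb]]]; [eassumption|].
    exists (Later c, Later d); split; [constructor | split; apply teq_later]; auto.
Qed.

Lemma arrow_bisimilar_arr A B C D : teq A C -> teq B D -> tail B <> TailBound ->
  arrow_bisimilar (Arr A B) (Arr C D).
Proof.
  intros HAC HBD NT. pose proof (tail_teq _ _ _ HBD) as T.
  split; intros p Hp; inversion Hp; subst; try (simpl in *; congruence).
  - exists (C, D); split; [constructor | split; auto].
  - exists (A, B); split; [constructor | split; apply teq_sym; auto].
Qed.

Lemma arrow_bisimilar_unfold A : wf (Mu A) -> arrow_bisimilar (Mu A) (subst0 A (Mu A)).
Proof.
  intros W. pose proof (wf_unfold A W) as W'. split; intros p Hp.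
  - inversion Hp; subst.
    + exists p; split; auto. eapply arrow_view_teq_pair_refl; eauto.
    + exists (a, top); split; [apply av_top; auto; rewrite tail_unfold; auto|].
      eapply arrow_view_teq_pair_refl; eauto.
  - exists p; split; [constructor; auto | eapply arrow_view_teq_pair_refl; eauto].
Qed.

Lemma arrow_bisimilar_fix A C : wf A -> wf C -> proper 0 C -> teq A (subst0 C A) ->
  tail A <> TailBound -> arrow_bisimilar A (subst0 C A) -> arrow_bisimilar A (Mu C).
Proof.
  intros WA WC PC H NT [I1 I2].
  assert (HF : teq A (Mu C)) by (apply teq_fix; auto).
  assert (TF : tail A = tail (Mu C)) by (apply tail_teq with dist; auto).
  assert (NT' : tail (subst0 C A) <> TailBound) by (rewrite <- (tail_teq _ _ _ H); auto).
  assert (HC : head_var C <> Some 0).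
  { intros E. destruct (head_var_tail C 0 E) as [d Ed]. apply NT.
    rewrite TF; simpl; rewrite Ed; reflexivity. }
  split; intros p Hp.
  - destruct (I1 _ Hp) as [q [Hq Eq]].
    destruct (arrow_view_subst A (Mu C) C 0 q HF WC HC NT' Hq) as [r [Hr Er]].
    exists r; split; [constructor; auto | eapply teq_pair_trans; eauto].
  - inversion Hp; subst; [|simpl in *; congruence].
    edestruct (arrow_view_subst (Mu C) A C 0 p (teq_sym _ _ _ HF) WC HC) as [q [Hq Eq]];
      [change (tail (subst0 C (Mu C)) <> TailBound); rewrite tail_unfold, <- TF; auto | eassumption |].
    destruct (I2 _ Hq) as [r [Hr Er]].
    exists r; split; [auto | eapply teq_pair_trans; eauto].
Qed.

Lemma arrow_bisimilar_dist A B : dist = true -> wf A -> wf B ->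
  tail B <> TailBound -> arrow_bisimilar (Later (Arr A B)) (Arr (Later A) (Later B)).
Proof.
  intros Hd WA WB NT.
  assert (NTL : tail (Later (Arr A B)) <> TailBound) by (intros T; apply tail_later_bound in T; auto).
  split; intros p Hp; inversion Hp; subst; try (simpl in *; congruence).
  - match goal with Hv : arrow_view (Arr A B) _ |- _ => inversion Hv; subst end;
      [|simpl in *; congruence].
    eexists; split; [constructor | split; apply teq_refl; constructor; auto].
  - exists (Later A, Later B); split; [repeat constructor | split; apply teq_refl; constructor]; auto.
Qed.

Lemma arrow_bisimilar_teq X Y : teq X Y -> arrow_bisimilar X Y.
Proof.
  intros H; induction H as [ | | | A B H IH | A B C D HAC _ HBD _ | A WA | A WA
                           | A C WA WC PC H IH | A B Hd WA WB ].
  - apply arrow_bisimilar_refl; auto.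
  - apply bisimilar_sym; auto.
  - eapply bisimilar_trans; eauto. apply teq_pair_trans.
  - apply arrow_bisimilar_split; [apply teq_later; auto | intros NT].
    apply arrow_bisimilar_later; auto.
  - apply arrow_bisimilar_split; [apply teq_arr; auto | intros NT].
    apply arrow_bisimilar_arr; auto.
  - apply arrow_bisimilar_split; [apply teq_arr_top; auto | intros NT].
    exfalso; apply NT; reflexivity.
  - apply arrow_bisimilar_unfold; auto.
  - apply arrow_bisimilar_split; [apply teq_fix; auto | intros NT].
    apply arrow_bisimilar_fix; auto.
  - apply arrow_bisimilar_split; [apply teq_dist; auto | intros NT].
    apply arrow_bisimilar_dist; auto.
    intros T; apply NT; simpl; rewrite T; reflexivity.
Qed.

Lemma teq_Arr_inv A B C D : wf C -> wf D -> teq (Arr A B) (Arr C D) ->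
  (teq A C /\ teq B D) \/ (teq B D /\ teq D top).
Proof.
  intros WC WD H.
  destruct (proj1 (arrow_bisimilar_teq _ _ H) (A, B) (av_arr A B)) as [q [Hq [EA EB]]].
  inversion Hq; subst; simpl in *; [left; auto | right].
  assert (TD : teq D top) by (apply tail_bound_teq_top; auto).
  split; [eapply teq_trans; [exact EB | apply teq_sym] |]; auto.
Qed.

End ArrowViews.

Theorem proposition4 :
  forall (dist : bool) (A B C D : ty),
    wf A -> wf B -> wf C -> wf D ->
    (teq dist (Later A) (Later B) <-> teq dist A B) /\
    (teq dist (Arr A B) (Arr C D) <->
       ((teq dist A C /\ teq dist B D) \/
        (teq dist B D /\ teq dist D top))).
Proof.
  intros dist A B C D WA WB WC WD. split; split.
  - apply teq_Later_inv; auto.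
  - apply teq_later.
  - apply teq_Arr_inv; auto.
  - intros [[HAC HBD] | [HBD HD]].
    + apply teq_arr; auto.
    + apply teq_trans with top; [|apply teq_sym]; apply teq_arr_top_r; auto.
      eapply teq_trans; eauto.
Qed.
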